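(* Let $q_1=(1,0,0)$, $q_2=(-1,0,0)$, $q_3=(0,1,0)$, $q_4=(0,-1,0)$, $q_5=(0,0,1)$, $q_6=(0,0,-1)$ be the vertices of a regular octahedron in $\mathbb{R}^3$, let $t\in(0,1)$ and let $q_{j+6}=tq_j$ for $j=1,\dots,6$. Suppose that positive masses $m_1,\dots,m_{12}$ placed at $q_1,\dots,q_{12}$ form a central configuration. Then $m_1=\dots=m_6$ and $m_7=\dots=m_{12}$.
   Context: A configuration $q=(q_1,\dots,q_N)$ of distinct points in $\mathbb{R}^3$ with masses $m_1,\dots,m_N$ is a central configuration if there exists $c\in\mathbb{R}$ such that $\sum_{j\neq i} m_j\left(\frac{1}{|q_j-q_i|^3}-c\right)(q_j-q_i)=0$ for all $i=1,\dots,N$. *)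

From Stdlib Require Import Reals Lra List.
Import ListNotations.
Open Scope R_scope.

Definition vec3 : Type := (R * R * R)%type.

Definition vx (v : vec3) : R := fst (fst v).
Definition vy (v : vec3) : R := snd (fst v).
Definition vz (v : vec3) : R := snd v.

Definition vsub (u v : vec3) : vec3 := (vx u - vx v, vy u - vy v, vz u - vz v).
Definition vscale (a : R) (v : vec3) : vec3 := (a * vx v, a * vy v, a * vz v).
Definition vnorm (v : vec3) : R := sqrt (vx v ^ 2 + vy v ^ 2 + vz v ^ 2).

Definition vsum_except (N i : nat) (F : nat -> vec3) : vec3 :=
  fold_right (fun j acc =>
      if Nat.eqb j i then acc
      else (vx (F j) + vx acc, vy (F j) + vy acc, vz (F j) + vz acc))
    (0, 0, 0) (seq 0 N).

Definition central_configuration (N : nat) (q : nat -> vec3) (m : nat -> R) : Prop :=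
  (forall i j, (i < N)%nat -> (j < N)%nat -> i <> j -> q i <> q j) /\
  exists c : R, forall i, (i < N)%nat ->
    vsum_except N i (fun j =>
      vscale (m j * (1 / (vnorm (vsub (q j) (q i))) ^ 3 - c)) (vsub (q j) (q i)))
    = (0, 0, 0).

(* Octahedron vertices q_1..q_6 (stored at indices 0..5) and the scaled
   copies q_{j+6} = t q_j (indices 6..11). *)
Definition octa (j : nat) : vec3 :=
  match j with
  | 0 => (1, 0, 0)
  | 1 => (-1, 0, 0)
  | 2 => (0, 1, 0)
  | 3 => (0, -1, 0)
  | 4 => (0, 0, 1)
  | _ => (0, 0, -1)
  end.

Definition two_octa (t : R) (k : nat) : vec3 :=
  if Nat.ltb k 6 then octa k else vscale t (octa (k - 6)).

(* All mutual distances are among 2, sqrt 2, 2t, t sqrt 2,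
   1 - t, 1 + t and sqrt (1 + t^2).  Taking suitable components of the balance
   equations of a few bodies and subtracting them eliminates c and leaves, for the
   difference x of two outer masses and the difference y of the corresponding inner
   masses, a system p1 x + p2 y = 0, q1 x - q2 y = 0 with p1, p2, q1, q2 > 0, since
   1/r^3 is decreasing and 1/(1-t)^2 + 1/(1+t)^2 > 2 > 2/(1+t^2)^(3/2).  Hence
   x = y = 0: first for antipodal pairs, then, using this, for different axes. *)

From Stdlib Require Import Reals Lra Lia.
Open Scope R_scope.

Definition cc_factor (c r : R) : R := 1 / r ^ 3 - c.

Lemma inv_cube_lt (a b : R) : 0 < a -> a < b -> 1 / b ^ 3 < 1 / a ^ 3.
Proof.
  intros Ha Hab.
  unfold Rdiv; rewrite !Rmult_1_l.
  apply Rinv_0_lt_contravar; [apply pow_lt; lra|].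
  assert (0 < b * b + a * b + a * a) by nra.
  nra.
Qed.

Lemma opposite_sign_system_zero (x y p1 p2 q1 q2 : R) :
  0 < p1 -> 0 < p2 -> 0 < q1 -> 0 < q2 ->
  p1 * x + p2 * y = 0 -> q1 * x - q2 * y = 0 -> x = 0 /\ y = 0.
Proof.
  intros Hp1 Hp2 Hq1 Hq2 Hp Hq.
  assert (Hdet : 0 < q1 * p2 + q2 * p1) by nra.
  assert (Hy : (q1 * p2 + q2 * p1) * y = 0) by nra.
  assert (y = 0) by (destruct (Rmult_integral _ _ Hy); lra).
  subst y; split; [|reflexivity].
  assert (Hx : p1 * x = 0) by lra.
  destruct (Rmult_integral _ _ Hx); lra.
Qed.

Section Coefficients.

Variables t c : R.
Hypothesis Ht : 0 < t < 1.

Let phi := cc_factor c.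
Let s := sqrt (1 + t ^ 2).

Lemma two_octa_distances :
  0 < t * sqrt 2 < s /\ 1 < s < sqrt 2 /\ sqrt 2 < 2 /\ t * sqrt 2 < 2 * t.
Proof.
  assert (H2 : sqrt 2 * sqrt 2 = 2) by (apply sqrt_sqrt; lra).
  assert (Hs : s * s = 1 + t ^ 2) by (apply sqrt_sqrt; nra).
  assert (0 < sqrt 2) by (apply sqrt_lt_R0; lra).
  assert (0 < s) by (apply sqrt_lt_R0; nra).
  repeat split; nra.
Qed.

Lemma cc_factor_lt (a b : R) : 0 < a -> a < b -> phi b < phi a.
Proof. intros Ha Hab. unfold phi, cc_factor. pose proof (inv_cube_lt a b Ha Hab). lra. Qed.

Lemma inv_sq_sum_gt2 : 2 < 1 / (1 - t) ^ 2 + 1 / (1 + t) ^ 2.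
Proof.
  replace (1 / (1 - t) ^ 2 + 1 / (1 + t) ^ 2)
    with (2 * (1 + t ^ 2) / (1 - t ^ 2) ^ 2) by (field; repeat split; nra).
  assert (0 < 1 - t ^ 2) by nra.
  apply Rmult_lt_reg_r with ((1 - t ^ 2) ^ 2); [nra|].
  unfold Rdiv; rewrite Rmult_assoc, Rinv_l by nra.
  nra.
Qed.

Lemma axial_sum_gt : 2 * phi s < (1 - t) * phi (1 - t) + (1 + t) * phi (1 + t).
Proof.
  destruct two_octa_distances as (_ & [Hs1 _] & _).
  pose proof (cc_factor_lt 1 s ltac:(lra) Hs1) as Hphi.
  pose proof inv_sq_sum_gt2.
  unfold phi, cc_factor in *.
  replace ((1 - t) * (1 / (1 - t) ^ 3 - c) + (1 + t) * (1 / (1 + t) ^ 3 - c))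
    with (1 / (1 - t) ^ 2 + 1 / (1 + t) ^ 2 - 2 * c) by (field; lra).
  lra.
Qed.

Lemma axial_diff_gt : (1 + t) * phi (1 + t) < (1 - t) * phi (1 - t) + 2 * t * phi s.
Proof.
  destruct two_octa_distances as (_ & [Hs1 _] & _).
  assert (Hs : 0 < 1 / s ^ 3) by (apply Rdiv_lt_0_compat; [lra | apply pow_lt; lra]).
  assert (1 / (1 + t) ^ 2 < 1 / (1 - t) ^ 2).
  { unfold Rdiv; rewrite !Rmult_1_l. apply Rinv_0_lt_contravar; nra. }
  unfold phi, cc_factor in *.
  replace ((1 - t) * (1 / (1 - t) ^ 3 - c)) with (1 / (1 - t) ^ 2 - (1 - t) * c)
    by (field; lra).
  replace ((1 + t) * (1 / (1 + t) ^ 3 - c)) with (1 / (1 + t) ^ 2 - (1 + t) * c)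
    by (field; lra).
  nra.
Qed.

(* [a, a'] are the masses of an outer antipodal pair, [b, b'] those of the inner
   pair on the same axis.  The hypotheses are the components along that axis of the
   balance at an outer body of a perpendicular axis, at an inner body of a
   perpendicular axis, and of the sum of the balances at [b] and [b']. *)
Lemma antipodal_eq_of_balance (a a' b b' : R) :
  (a - a') * phi (sqrt 2) + t * (b - b') * phi s = 0 ->
  (a - a') * phi s + t * (b - b') * phi (t * sqrt 2) = 0 ->
  (a - a') * ((1 - t) * phi (1 - t) + (1 + t) * phi (1 + t))
    + 2 * t * (b - b') * phi (2 * t) = 0 ->
  a = a' /\ b = b'.
Proof.
  intros Houter Hinner Haxial.
  destruct two_octa_distances as ([Htw Hts] & [_ Hsw] & _ & Ht2).
  pose proof (cc_factor_lt s (sqrt 2) ltac:(lra) Hsw).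
  pose proof (cc_factor_lt (t * sqrt 2) s Htw Hts).
  pose proof (cc_factor_lt (t * sqrt 2) (2 * t) Htw Ht2).
  pose proof axial_sum_gt.
  enough (a - a' = 0 /\ b - b' = 0) by lra.
  apply (opposite_sign_system_zero (a - a') (b - b')
              (phi s - phi (sqrt 2)) (t * (phi (t * sqrt 2) - phi s))
              ((1 - t) * phi (1 - t) + (1 + t) * phi (1 + t) - 2 * phi s)
              (2 * t * (phi (t * sqrt 2) - phi (2 * t)))); nra.
Qed.

(* Antipodal masses being equal, [a, b] are outer and [A, B] inner masses on two
   different axes.  The hypotheses are the differences of the balances at the two
   outer, resp. inner, bodies, each taken along its own axis. *)
Lemma equal_axes_of_balance (a b A B : R) :
  2 * (a - b) * (phi (sqrt 2) - phi 2)
    = (A - B) * ((1 - t) * phi (1 - t) + (1 + t) * phi (1 + t) - 2 * phi s) ->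
  (a - b) * ((1 - t) * phi (1 - t) - (1 + t) * phi (1 + t) + 2 * t * phi s)
    + 2 * t * (A - B) * (phi (t * sqrt 2) - phi (2 * t)) = 0 ->
  a = b /\ A = B.
Proof.
  intros Houter Hinner.
  destruct two_octa_distances as ([Htw Hts] & [Hs1 Hsw] & Hw2 & Ht2).
  pose proof (cc_factor_lt (sqrt 2) 2 ltac:(lra) Hw2).
  pose proof (cc_factor_lt (t * sqrt 2) (2 * t) Htw Ht2).
  pose proof axial_sum_gt; pose proof axial_diff_gt.
  enough (a - b = 0 /\ A - B = 0) by lra.
  apply (opposite_sign_system_zero (a - b) (A - B)
              ((1 - t) * phi (1 - t) - (1 + t) * phi (1 + t) + 2 * t * phi s)
              (2 * t * (phi (t * sqrt 2) - phi (2 * t)))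
              (2 * (phi (sqrt 2) - phi 2))
              ((1 - t) * phi (1 - t) + (1 + t) * phi (1 + t) - 2 * phi s)); nra.
Qed.

End Coefficients.

Lemma vnorm_eq (v : vec3) (r : R) :
  0 <= r -> vx v ^ 2 + vy v ^ 2 + vz v ^ 2 = r ^ 2 -> vnorm v = r.
Proof. intros Hr Hv. unfold vnorm. rewrite Hv. now apply sqrt_pow2. Qed.

Section Balance.

Variables (t c : R) (m : nat -> R).
Hypothesis Ht : 0 < t < 1.
Hypothesis Hbal : forall i, (i < 12)%nat ->
  vsum_except 12 i (fun j =>
    vscale (m j * (1 / vnorm (vsub (two_octa t j) (two_octa t i)) ^ 3 - c))
      (vsub (two_octa t j) (two_octa t i))) = (0, 0, 0).

Ltac dist_side :=
  match goal with
  | |- 0 <= _ =>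
      clear - Ht; first [ lra | apply sqrt_pos | apply Rmult_le_pos; [lra | apply sqrt_pos] ]
  | |- _ = _ =>
      cbv [vx vy vz fst snd]; rewrite ?Rpow_mult_distr, ?pow2_sqrt by (clear - Ht; nra); ring
  end.

Ltac balance_at i Fx Fy Fz :=
  let H := fresh in
  pose proof (Hbal i ltac:(lia)) as H;
  cbv [vsum_except List.seq List.fold_right Nat.eqb two_octa Nat.ltb Nat.leb
       octa vscale vsub vx vy vz fst snd Nat.sub] in H;
  (* every mutual distance of the configuration is one of these seven *)
  repeat match type of H with
  | context [vnorm ?v] =>
    first [ rewrite (vnorm_eq v 2) in H by dist_side
          | rewrite (vnorm_eq v (sqrt 2)) in H by dist_side
          | rewrite (vnorm_eq v (2 * t)) in H by dist_side
          | rewrite (vnorm_eq v (t * sqrt 2)) in H by dist_side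
          | rewrite (vnorm_eq v (1 - t)) in H by dist_side
          | rewrite (vnorm_eq v (1 + t)) in H by dist_side
          | rewrite (vnorm_eq v (sqrt (1 + t ^ 2))) in H by dist_side ]
  end;
  apply pair_equal_spec in H as [H Fz]; apply pair_equal_spec in H as [Fx Fy].

Lemma two_octa_antipodal_masses :
  m 1 = m 0 /\ m 7 = m 6 /\ m 3 = m 2 /\ m 9 = m 8 /\ m 5 = m 4 /\ m 11 = m 10.
Proof.
  balance_at 0%nat Fx0 Fy0 Fz0. balance_at 2%nat Fx2 Fy2 Fz2.
  balance_at 6%nat Fx6 Fy6 Fz6. balance_at 7%nat Fx7 Fy7 Fz7.
  balance_at 8%nat Fx8 Fy8 Fz8. balance_at 9%nat Fx9 Fy9 Fz9.
  balance_at 10%nat Fx10 Fy10 Fz10. balance_at 11%nat Fx11 Fy11 Fz11.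
  destruct (antipodal_eq_of_balance t c Ht (m 0) (m 1) (m 6) (m 7));
    [unfold cc_factor; lra ..|].
  destruct (antipodal_eq_of_balance t c Ht (m 2) (m 3) (m 8) (m 9));
    [unfold cc_factor; lra ..|].
  destruct (antipodal_eq_of_balance t c Ht (m 4) (m 5) (m 10) (m 11));
    [unfold cc_factor; lra ..|].
  repeat split; congruence.
Qed.

Lemma two_octa_axis_masses : m 2 = m 0 /\ m 8 = m 6 /\ m 4 = m 0 /\ m 10 = m 6.
Proof.
  destruct two_octa_antipodal_masses as (E1 & E7 & E3 & E9 & E5 & E11).
  balance_at 0%nat Fx0 Fy0 Fz0. balance_at 2%nat Fx2 Fy2 Fz2.
  balance_at 4%nat Fx4 Fy4 Fz4. balance_at 6%nat Fx6 Fy6 Fz6.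
  balance_at 8%nat Fx8 Fy8 Fz8. balance_at 10%nat Fx10 Fy10 Fz10.
  rewrite E1, E7, E3, E9, E5, E11 in *.
  destruct (equal_axes_of_balance t c Ht (m 0) (m 2) (m 6) (m 8));
    [unfold cc_factor; lra ..|].
  destruct (equal_axes_of_balance t c Ht (m 0) (m 4) (m 6) (m 10));
    [unfold cc_factor; lra ..|].
  repeat split; congruence.
Qed.

End Balance.

Theorem theorem8 (t : R) (m : nat -> R) :
  0 < t < 1 ->
  (forall k, (k < 12)%nat -> 0 < m k) ->
  central_configuration 12 (two_octa t) m ->
  (forall k, (k < 6)%nat -> m k = m 0%nat) /\
  (forall k, (6 <= k < 12)%nat -> m k = m 6%nat).
Proof.
  intros Ht _ [_ [c Hbal]].
  destruct (two_octa_antipodal_masses t c m Ht Hbal) as (E1 & E7 & E3 & E9 & E5 & E11).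
  destruct (two_octa_axis_masses t c m Ht Hbal) as (E2 & E8 & E4 & E10).
  split; intros k Hk.
  - do 6 (destruct k as [|k]; [congruence|]); lia.
  - do 6 (destruct k as [|k]; [lia|]).
    do 6 (destruct k as [|k]; [congruence|]); lia.
Qed.
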